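(* Let $d\ge 1$ and $h\ge 1$ be integers and let $T$ be the complete $d$-ary tree of height $h$. For every integer $0\le l\le h$ and every vertex $x$ at distance $l$ from the root, the hitting time from $x$ to the root is $f_h(d)-f_{h-l}(d)$.
   Context: The complete $d$-ary tree of height $h$ is the rooted tree in which every vertex at depth less than $h$ has exactly $d$ children and every vertex at depth $h$ is a leaf. For nonnegative integers $n$, define the polynomial $f_0(d)=0$ and, for $n\ge 1$, $f_n(d)=\left(\sum_{i=0}^{n-1}(2n-2i)d^i\right)-n$. A simple random walk moves at each step to a uniformly random neighbor; the hitting time from $x$ to $y$ is the expected number of steps for a simple random walk started at $x$ to first reach $y$. *)

From HB Require Import structures.
From mathcomp Require Import all_boot all_order all_algebra.
From mathcomp Require Import all_classical all_reals all_analysis.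
Set Implicit Arguments. Unset Strict Implicit. Unset Printing Implicit Defensive.
Import Order.TTheory GRing.Theory Num.Theory.
Local Open Scope ring_scope.

(* Complete d-ary tree of height h: vertices are words w : seq 'I_d with
   size w <= h; the root is [::]; the children of w (when size w < h) are
   rcons w i for i : 'I_d; the parent of a nonempty word is obtained by
   dropping its last letter.  The distance of w to the root is size w. *)
Definition tree_root (d : nat) : seq 'I_d := [::].

(* list of neighbours of the vertex w in the tree (without repetitions) *)
Definition tree_nbrs (d h : nat) (w : seq 'I_d) : seq (seq 'I_d) :=
  (if w is [::] then [::] else [:: take (size w).-1 w]) ++
  (if (size w < h)%N then [seq rcons w i | i <- enum 'I_d] else [::]).

Definition tree_deg (d h : nat) (w : seq 'I_d) : nat := size (tree_nbrs h w).

Fixpoint tree_walks (d h : nat) (x : seq 'I_d) (t : nat) : seq (seq (seq 'I_d)) :=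
  match t with
  | 0 => [:: [:: x]]
  | t'.+1 => flatten [seq [seq x :: p | p <- tree_walks h y t'] | y <- tree_nbrs h x]
  end.

Fixpoint walk_prob (R : realType) (d h : nat) (p : seq (seq 'I_d)) : R :=
  match p with
  | [::] => 1
  | [:: _] => 1
  | v :: p' => (tree_deg h v)%:R^-1 * walk_prob R h p'
  end.

(* P_x(tau_root > t): probability that the walk started at x has not
   visited the root at times 0,...,t *)
Definition surv_prob (R : realType) (d h : nat) (x : seq 'I_d) (t : nat) : R :=
  \sum_(p <- tree_walks h x t | all (fun v => v != tree_root d) p) walk_prob R h p.

(* hitting time of the root from x: E_x[tau_root] = sum_{t>=0} P_x(tau_root > t),
   as an extended real (+oo if the series diverges) *)
Definition hitting_time_root (R : realType) (d h : nat) (x : seq 'I_d) : \bar R :=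
  (\sum_(0 <= t <oo) (surv_prob R h x t)%:E)%E.

Definition fpoly (R : realType) (n : nat) (d : R) : R :=
  if n is 0 then 0
  else \sum_(i < n) ((2 * n - 2 * i)%N)%:R * d ^+ i - n%:R.

From HB Require Import structures.
From mathcomp Require Import all_boot all_order all_algebra.
From mathcomp Require Import all_classical all_reals all_analysis.
From mathcomp Require Import zify ring lra.
Import Order.TTheory GRing.Theory Num.Theory numFieldNormedType.Exports.
Set Implicit Arguments. Unset Strict Implicit.
Local Open Scope classical_set_scope.
Local Open Scope ring_scope.

(* The function g(x) = f_h(d) - f_(h-|x|)(d) vanishes at the root, and off the
   root it solves the first-step equation g = 1 + (mean of g over the
   neighbours), because the increments D_n = f_(n+1)(d) - f_n(d) satisfy
   D_(n+1) = (d+1) + d D_n.  Iterating this equation t times writes g(x) as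
   sum_(i<t) P_x(tau > i) + E_x[g(X_t); tau > t], and the remainder is at most
   f_h(d) P_x(tau > t).  The partial sums are thus bounded by g(x), so the
   series converges, its terms tend to 0, and so does the remainder. *)

Lemma cvg_series_remainder (R : realType) (s r : R^nat) (a M : R) :
  (forall n, 0 <= s n) -> (forall n, series s n + r n = a) ->
  (forall n, 0 <= r n <= M * s n) -> series s @ \oo --> a.
Proof.
move=> s_ge0 sumE r_bound.
have seriesE n : series s n = a - r n by rewrite -(sumE n) addrK.
have cvg_s : cvgn (series s).
  apply: nondecreasing_is_cvgn; first exact: nondecreasing_series.
  exists a => _ [n _ <-]; rewrite seriesE lerBlDr lerDl.
  by case/andP: (r_bound n).
have r_cvg0 : r @ \oo --> 0.
  apply: (@squeeze_cvgr _ _ _ _ (fun=> 0) (fun n => M * s n)).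
  - exact: nearW.
  - exact: cvg_cst.
  - by rewrite -(mulr0 M); apply: cvgMl_tmp; exact: cvg_series_cvg_0.
by rewrite (funext seriesE) -[X in _ --> X]subr0; apply: cvgB => //; exact: cvg_cst.
Qed.

Section Polynomial.
Variable R : realType.

Lemma fpolyS n (x : R) :
  fpoly n.+1 x = fpoly n x + (2 * \sum_(i < n.+1) x ^+ i - 1).
Proof.
have fpolyE m : fpoly m x = \sum_(i < m) ((2 * m - 2 * i)%N)%:R * x ^+ i - m%:R.
  by case: m => [|m] //=; rewrite big_ord0 subr0.
have coefS (i : 'I_n.+1) : (2 * n.+1 - 2 * i = (2 * n - 2 * i) + 2)%N.
  by have := ltn_ord i; lia.
rewrite !fpolyE; under eq_bigr => i _ do rewrite coefS natrD mulrDl.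
rewrite big_split /= -mulr_sumr big_ord_recr /= subnn mul0r addr0 -natr1.
ring.
Qed.

Lemma fpoly1 (x : R) : fpoly 1 x = 1.
Proof. rewrite fpolyS big_ord1 expr0 /=; lra. Qed.

Lemma fpoly_incrS n (x : R) :
  fpoly n.+2 x - fpoly n.+1 x = (x + 1) + x * (fpoly n.+1 x - fpoly n x).
Proof.
have geomS : \sum_(i < n.+2) x ^+ i = 1 + x * \sum_(i < n.+1) x ^+ i.
  rewrite big_ord_recl expr0 mulr_sumr; congr (_ + _).
  by apply: eq_bigr => i _; rewrite -exprS.
rewrite !fpolyS geomS; ring.
Qed.

Lemma fpoly_le (x : R) :
  0 <= x -> {homo (fun n => fpoly n x) : m n / (m <= n)%N >-> m <= n}.
Proof.
move=> x_ge0; apply: (@homo_leq _ (fun n => fpoly n x) (fun a b => a <= b)) => //.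
  exact: le_trans.
move=> {}n; cbv beta.
rewrite fpolyS lerDl subr_ge0 big_ord_recl expr0.
have : 0 <= \sum_(i < n) x ^+ bump 0 i by apply: sumr_ge0 => i _; exact: exprn_ge0.
lra.
Qed.

Lemma fpoly_ge0 (x : R) n : 0 <= x -> 0 <= fpoly n x.
Proof. by move=> x_ge0; exact: fpoly_le x x_ge0 _ _ (leq0n n). Qed.

End Polynomial.

Section KilledWalk.
Variables (R : realType) (d h : nat).
Local Notation V := (seq 'I_d).

Definition not_root (x : V) : R := (x != tree_root d)%:R.

Definition nbr_mean (F : V -> R) (x : V) : R :=
  \sum_(y <- tree_nbrs h x) (tree_deg h x)%:R^-1 * F y.

(* One step of the walk killed at the root: [iter t killed_mean F x] is
   E_x[F(X_t); tau_root > t]. *)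
Definition killed_mean (F : V -> R) (x : V) : R := not_root x * nbr_mean F x.

Lemma tree_walks_neq0 (x : V) t : all (fun p => p != [::]) (tree_walks h x t).
Proof.
case: t => [|t] //=; apply/allP => p /flattenP [s /mapP [y _ ->]] /mapP [q _ ->] //.
Qed.

Lemma surv_probE t (x : V) : surv_prob R h x t = iter t killed_mean not_root x.
Proof.
rewrite /surv_prob; elim: t x => [|t IH] x /=.
  by rewrite big_cons big_nil /not_root /= andbT addr0; case: (_ != _).
rewrite big_mkcond big_allpairs_dep /= /killed_mean /nbr_mean /not_root.
have [->|x_neq0] := eqVneq x (tree_root d); rewrite /=.
  by rewrite mul0r; apply: big1 => y _; apply: big1.
rewrite mul1r; apply: eq_bigr => y _; rewrite -IH mulr_sumr [in RHS]big_mkcond.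
rewrite big_seq [RHS]big_seq; apply: eq_bigr => p p_walk.
by case: p p_walk (allP (tree_walks_neq0 y t) p p_walk).
Qed.

Lemma killed_mean_eq_in (F G : V -> R) x :
  {in tree_nbrs h x, F =1 G} -> killed_mean F x = killed_mean G x.
Proof. by move=> FG; congr (_ * _); apply: eq_big_seq => y /FG ->. Qed.

Lemma killed_meanD (F G : V -> R) x :
  killed_mean (fun y => F y + G y) x = killed_mean F x + killed_mean G x.
Proof.
rewrite /killed_mean /nbr_mean -mulrDr -big_split /=.
by congr (_ * _); apply: eq_bigr => y _; rewrite mulrDr.
Qed.

Lemma killed_mean_sum (I : Type) (r : seq I) (F : I -> V -> R) x :
  killed_mean (fun y => \sum_(i <- r) F i y) x = \sum_(i <- r) killed_mean (F i) x.
Proof.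
rewrite /killed_mean /nbr_mean -[RHS]mulr_sumr [in RHS]exchange_big /=; congr (_ * _).
by apply: eq_bigr => y _; rewrite mulr_sumr.
Qed.

Lemma killed_meanZ c (F : V -> R) x :
  killed_mean (fun y => c * F y) x = c * killed_mean F x.
Proof.
rewrite /killed_mean /nbr_mean [RHS]mulrCA; congr (_ * _).
by rewrite mulr_sumr; apply: eq_bigr => y _; rewrite mulrCA.
Qed.

Lemma ler_killed_mean (F G : V -> R) x :
  {in tree_nbrs h x, forall y, F y <= G y} -> killed_mean F x <= killed_mean G x.
Proof.
move=> FG; rewrite ler_wpM2l ?ler0n // /nbr_mean big_seq [leRHS]big_seq.
by apply: ler_sum => y /FG; apply: ler_wpM2l; rewrite invr_ge0.
Qed.

Lemma killed_mean0 x : killed_mean (fun=> 0) x = 0.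
Proof. by rewrite /killed_mean /nbr_mean big1 ?mulr0 // => y _; rewrite mulr0. Qed.

Lemma iter_killed_mean_ge0 t (F : V -> R) x :
  (forall y, 0 <= F y) -> 0 <= iter t killed_mean F x.
Proof.
move=> F_ge0; elim: t x => [|t IH] x //=.
by rewrite -(killed_mean0 x); apply: ler_killed_mean => y _.
Qed.

Lemma size_tree_nbrs (x y : V) :
  (size x <= h)%N -> y \in tree_nbrs h x -> (size y <= h)%N.
Proof.
move=> x_le; rewrite mem_cat => /orP [].
  case: x x_le => //= a x x_le; rewrite inE => /eqP ->; rewrite size_take /=.
  by case: ifP; lia.
by case: ifP => // x_lt /mapP [i _ ->]; rewrite size_rcons.
Qed.

Section FirstStep.
Variables (g : V -> R) (M : R).
Hypothesis g_step : forall x, (size x <= h)%N -> g x = not_root x + killed_mean g x.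
Hypothesis g_bound : forall x, (size x <= h)%N -> 0 <= g x <= M * not_root x.

Lemma sum_survival_add_remainder t x : (size x <= h)%N ->
  \sum_(i < t) iter i killed_mean not_root x + iter t killed_mean g x = g x.
Proof.
elim: t x => [|t IH] x x_le; first by rewrite big_ord0 add0r.
rewrite big_ord_recl /= -addrA -killed_mean_sum -killed_meanD [RHS]g_step //.
congr (_ + _); apply: killed_mean_eq_in => y y_nbr.
by rewrite -[RHS](IH y (size_tree_nbrs x_le y_nbr)).
Qed.

Lemma remainder_bound t x : (size x <= h)%N ->
  0 <= iter t killed_mean g x <= M * iter t killed_mean not_root x.
Proof.
elim: t x => [|t IH] x x_le /=; first exact: g_bound.
rewrite -killed_meanZ -{1}(killed_mean0 x).
by apply/andP; split; apply: ler_killed_mean => y /(size_tree_nbrs x_le) /IH /andP[].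
Qed.

Lemma hitting_time_rootE x : (size x <= h)%N -> hitting_time_root R h x = (g x)%:E.
Proof.
move=> x_le; pose s t := iter t killed_mean not_root x.
have cvg_s : series s @ \oo --> g x.
  apply: (@cvg_series_remainder _ _ (fun t => iter t killed_mean g x) _ M).
  - by move=> t; apply: iter_killed_mean_ge0 => y; rewrite ler0n.
  - by move=> t; rewrite /series /= big_mkord; exact: sum_survival_add_remainder.
  - by move=> t; exact: remainder_bound.
rewrite /hitting_time_root.
have -> : (fun n => \sum_(0 <= t < n) (surv_prob R h x t)%:E)%E = EFin \o series s.
  apply: funext => n /=; rewrite sumEFin; congr _%:E.
  by apply: eq_bigr => t _; rewrite surv_probE.
by rewrite EFin_lim ?(cvg_lim _ cvg_s) //; apply/cvg_ex; exists (g x).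
Qed.
End FirstStep.
End KilledWalk.

Section TreeFormula.
Variables (R : realType) (d h : nat).
Local Notation V := (seq 'I_d).
Local Notation D := (d%:R : R).

Definition hitting_time_formula (x : V) : R := fpoly h D - fpoly (h - size x) D.

Lemma hitting_time_formula_step (x : V) : (size x <= h)%N ->
  hitting_time_formula x = not_root R x + killed_mean h hitting_time_formula x.
Proof.
rewrite /killed_mean /not_root /hitting_time_formula.
case: x => [|a w] /= x_le; first by rewrite subn0 subrr mul0r addr0.
rewrite mul1r /nbr_mean /tree_deg /tree_nbrs /= big_cons size_take ltnSn.
case: ifP => x_lt.
  rewrite big_map size_map size_enum_ord.
  have size_child j : size (a :: rcons w j) = (size w).+2 by rewrite /= size_rcons.
  under eq_bigr do rewrite size_child.
  rewrite big_const_seq count_predT size_enum_ord iter_addr_0.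
  rewrite -[(_ * _) *+ d]mulr_natr -[d.+1%:R]natr1.
  have [k hk] : exists k, (h - (size w).+1 = k.+1)%N by exists (h - (size w).+2)%N; lia.
  have -> : (h - (size w).+2 = k)%N by lia.
  have -> : (h - size w = k.+2)%N by lia.
  rewrite hk -[fpoly k.+2 D](subrK (fpoly k.+1 D)) fpoly_incrS.
  have D1_neq0 : D + 1 != 0 by rewrite natr1 pnatr_eq0.
  by field.
have leaf : (size w).+1 = h by apply/eqP; rewrite eqn_leq x_le leqNgt x_lt.
rewrite -[in (h - _.+1)%N]leaf -[in (h - size w)%N]leaf subnn subSnn fpoly1 big_nil /=.
by rewrite invr1; ring.
Qed.

Lemma hitting_time_formula_bound (x : V) : (size x <= h)%N ->
  0 <= hitting_time_formula x <= fpoly h D * not_root R x.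
Proof.
rewrite /hitting_time_formula /not_root.
case: x => [|a w] x_le /=; first by rewrite subn0 subrr mulr0 lexx.
have D_ge0 : 0 <= D := ler0n _ d.
by rewrite mulr1 subr_ge0 fpoly_le ?leq_subr //= lerBlDr lerDl fpoly_ge0.
Qed.

End TreeFormula.

Theorem mainTheorem7 (R : realType) (d h l : nat) (x : seq 'I_d) :
  (1 <= d)%N -> (1 <= h)%N -> (l <= h)%N -> size x = l ->
  hitting_time_root R h x = (fpoly h (d%:R : R) - fpoly (h - l) (d%:R : R))%:E.
Proof.
move=> _ _ + size_x; rewrite -size_x => x_le.
apply: (hitting_time_rootE _ (@hitting_time_formula_bound R d h)) x_le.
exact: hitting_time_formula_step.
Qed.
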